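(* Let $N$ be a positive integer and $\mathbf a,\mathbf b,\mathbf c\in\mathbb R^N$ arbitrary column vectors. For nonnegative integers $l,m,n$ with $l+m+n=N$ let $D_{l,m,n}=[\mathbf a\cdots\mathbf a\ \mathbf b\cdots\mathbf b\ \mathbf c\cdots\mathbf c]$ be the $N\times N$ matrix whose first $l$ columns equal $\mathbf a$, next $m$ columns equal $\mathbf b$, and last $n$ columns equal $\mathbf c$. If $l,m,n,l',m',n'$ are nonnegative integers with $l+m+n=l'+m'+n'=N$, $0\le l<l'$ and $0\le m'<m$, then $$\mathrm{UP}[D_{l,m,n}]+\mathrm{UP}[D_{l',m',n'}]\le \mathrm{UP}[D_{l+1,m-1,n}]+\mathrm{UP}[D_{l'-1,m'+1,n'}].$$
   Context: For a real $N\times N$ matrix $A=[a_{ij}]$, the ultradiscrete permanent is $\mathrm{UP}[A]=\max_{\pi}(a_{1\pi_1}+a_{2\pi_2}+\cdots+a_{N\pi_N})$, the maximum over all permutations $\pi$ of $\{1,\dots,N\}$. *)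

(* Reals are modelled by an arbitrary realFieldType R
   (the statement is purely order-algebraic, so this generalizes R). *)
From HB Require Import structures.
From mathcomp Require Import all_boot all_order all_fingroup all_algebra.
Set Implicit Arguments. Unset Strict Implicit. Unset Printing Implicit Defensive.
Import Order.TTheory GRing.Theory Num.Theory.
Local Open Scope ring_scope.

(* The identity permutation's term is used as the seed of the max, which
   is harmless since the identity is itself one of the permutations. *)
Definition UP (R : realDomainType) (N : nat) (A : 'M[R]_N) : R :=
  \big[Num.max / \sum_(i < N) A i i]_(s : 'S_N) \sum_(i < N) A i (s i).

(* D_{l,m,n}: first l columns = a, next m columns = b, last n columns = c.
   (n is determined by l + m + n = N; columns with index >= l + m are c.) *)
Definition Dmat (R : realDomainType) (N : nat) (a b c : 'cV[R]_N)
    (l m n : nat) : 'M[R]_N :=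
  \matrix_(i < N, j < N)
     if (j < l)%N then a i 0 else if (j < l + m)%N then b i 0 else c i 0.

(* Let s, t be optimal permutations for D_{l,m,n} and D_{l',m',n'}.  Turning the
   first b-column of D_{l,m,n} into an a-column, a row k sent by s into the
   b-block can be re-routed to that column, so UP[D_{l+1,m-1,n}] is at least
   the value of s plus a_k - b_k; symmetrically, a row i sent by t into the
   a-block gives UP[D_{l'-1,m'+1,n'}] at least the value of t plus b_i - a_i.
   If one row is in the b-block for s and the a-block for t, adding the two
   bounds proves the claim.  Otherwise counting (m' < m, l < l') yields rows i
   (b-block for s, c-block for t) and k (c-block for s, a-block for t);
   exchanging the images of i and k in both s and t changes the total value by
   a_i - a_k + b_k - b_i, which is exactly compensated by the two bounds applied
   at k for s and at i for t. *)
From HB Require Import structures.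
From mathcomp Require Import all_boot all_order all_fingroup all_algebra.
From mathcomp Require Import ring lra zify.
Set Implicit Arguments. Unset Strict Implicit. Unset Printing Implicit Defensive.
Import Order.TTheory GRing.Theory Num.Theory.
Local Open Scope ring_scope.

Section UltradiscretePermanent.
Variables (R : realDomainType) (N : nat).
Implicit Types (A : 'M[R]_N) (s : 'S_N).

Lemma perm_sum_le_UP A s : \sum_i A i (s i) <= UP A.
Proof.
rewrite /UP; have : s \in index_enum {perm 'I_N} by rewrite mem_index_enum.
elim: (index_enum _) => [//|t r IHr]; rewrite inE big_cons le_max.
by case/orP=> [/eqP->|/IHr->]; rewrite ?lexx ?orbT.
Qed.

Lemma UP_attained A : exists s, UP A = \sum_i A i (s i).
Proof.
rewrite /UP; apply: (big_ind (fun v => exists s : 'S_N, v = \sum_i A i (s i))).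
- by exists 1%g; apply: eq_bigr => i _; rewrite perm1.
- move=> _ _ [s1 ->] [s2 ->].
  by case: leP => _; [exists s2 | exists s1].
- by move=> s _; exists s.
Qed.

Lemma sum_tperm_mul A s i k : i != k ->
  \sum_x A x ((tperm i k * s)%g x) + A i (s i) + A k (s k) =
  \sum_x A x (s x) + A i (s k) + A k (s i).
Proof.
move=> neq_ik; have neq_ki : k != i by rewrite eq_sym.
rewrite (bigD1 i) // (bigD1 k) //= [in RHS](bigD1 i) // [in RHS](bigD1 k) //=.
rewrite !permM tpermL tpermR (eq_bigr (fun x => A x (s x))); first ring.
by move=> x /andP[xi xk]; rewrite permM tpermD // eq_sym.
Qed.

(* Re-route row k to column j0 by exchanging it with the row s^-1 j0; since
   column s k of A equals column j0, this does not change the value in A. *)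
Lemma le_UP_col_update A A' (j0 : 'I_N) s k :
    (forall x, A x (s k) = A x j0) ->
    (forall x j, j != j0 -> A' x j = A x j) ->
  \sum_x A x (s x) + A' k j0 - A k j0 <= UP A'.
Proof.
move=> eq_col eq_off.
pose r := (s^-1)%g j0; have sr : s r = j0 by rewrite permKV.
pose u := (tperm k r * s)%g; have uk : u k = j0 by rewrite permM tpermL.
have sum_u : \sum_x A x (u x) = \sum_x A x (s x).
  apply: eq_bigr => x _; rewrite permM.
  by case: tpermP => [->|->|//]; rewrite ?sr eq_col.
have sum'_u : \sum_x A' x (u x) = \sum_x A x (u x) + A' k j0 - A k j0.
  rewrite (bigD1 k) // [in RHS](bigD1 k) //= uk.
  rewrite (eq_bigr (fun x => A x (u x))); first ring.
  move=> x neq_xk; apply: eq_off; rewrite -uk (inj_eq perm_inj); exact: neq_xk.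
by rewrite -sum_u -sum'_u perm_sum_le_UP.
Qed.

End UltradiscretePermanent.

Lemma card_perm_lt {N} (s : 'S_N) p : (p <= N)%N -> #|[set x | (s x < p)%N]| = p.
Proof.
move=> le_pN.
have -> : [set x | (s x < p)%N] = s @^-1: [set widen_ord le_pN j | j : 'I_p].
  apply/setP=> x; rewrite !inE; apply/idP/imsetP => [lt_sx_p | [j _ ->]].
    by exists (Ordinal lt_sx_p); last apply: val_inj.
  exact: (ltn_ord j).
rewrite card_preimset ?card_imset ?card_ord //; last exact: perm_inj.
by move=> i j /(congr1 val) /= /val_inj.
Qed.

Lemma card_perm_block {N} (s : 'S_N) p q : (p <= q <= N)%N ->
  #|[set x | (p <= s x < q)%N]| = (q - p)%N.
Proof.
case/andP=> le_pq le_qN.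
have -> : [set x | (p <= s x < q)%N] = [set x | (s x < q)%N] :\: [set x | (s x < p)%N].
  by apply/setP=> x; rewrite !inE -leqNgt andbC.
rewrite cardsD (setIidPr _) ?card_perm_lt ?(leq_trans le_pq) //.
by apply/subsetP=> x; rewrite !inE => /leq_trans; apply.
Qed.

Lemma perm_block_exchange N (s t : 'S_N) (l m l' m' : nat) :
    (l + m <= N)%N -> (l' + m' <= N)%N -> (l < l')%N -> (m' < m)%N ->
  (exists i, (l <= s i < l + m)%N && (t i < l')%N) \/
  (exists i k, [&& (l <= s i < l + m)%N, (l' + m' <= t i)%N,
                   (l + m <= s k)%N & (t k < l')%N]).
Proof.
move=> le_s le_t lt_l lt_m.
case: (pickP [pred i | (l <= s i < l + m)%N && (t i < l')%N]) => [i ba_i|no_ba].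
  by left; exists i.
right.
have [i /andP[s_i t_i]] : exists i, (l <= s i < l + m)%N && (l' + m' <= t i)%N.
  apply/existsP; apply: contraLR lt_m => /existsPn no_bc; rewrite -leqNgt.
  rewrite -[m](addKn l) -[m'](addKn l').
  rewrite -(card_perm_block s) -?(card_perm_block t) ?leq_addr //.
  apply/subset_leq_card/subsetP => x; rewrite !inE.
  by move: (no_ba x) (no_bc x) => /= /negbT; lia.
have [k /andP[s_k t_k]] : exists k, (l + m <= s k)%N && (t k < l')%N.
  apply/existsP; apply: contraLR lt_l => /existsPn no_ca; rewrite -leqNgt.
  rewrite -(card_perm_lt (p := l) s) ?(leq_trans (leq_addr m l)) //.
  rewrite -(card_perm_lt (p := l') t) ?(leq_trans (leq_addr m' l')) //.
  apply/subset_leq_card/subsetP => x; rewrite !inE.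
  by move: (no_ba x) (no_ca x) => /= /negbT; lia.
by exists i, k; rewrite s_i t_i s_k t_k.
Qed.

Section BlockMatrix.
Variables (R : realDomainType) (N : nat) (a b c : 'cV[R]_N).
Implicit Types (l m n : nat) (s : 'S_N).

Lemma Dmat_a l m n (j : 'I_N) : (j < l)%N -> forall x, Dmat a b c l m n x j = a x 0.
Proof. by move=> lt_jl x; rewrite mxE lt_jl. Qed.

Lemma Dmat_b l m n (j : 'I_N) : (l <= j < l + m)%N -> forall x, Dmat a b c l m n x j = b x 0.
Proof. by case/andP=> /leq_gtF le_lj lt_jlm x; rewrite mxE le_lj lt_jlm. Qed.

Lemma Dmat_c l m n (j : 'I_N) : (l + m <= j)%N -> forall x, Dmat a b c l m n x j = c x 0.
Proof. by move=> le_lm_j x; rewrite mxE !leq_gtF // (leq_trans (leq_addr m l)). Qed.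

Lemma le_UP_Dmat_grow_a l m n s k : (l <= s k < l + m)%N ->
  \sum_x Dmat a b c l m n x (s x) + a k 0 - b k 0 <= UP (Dmat a b c l.+1 m.-1 n).
Proof.
move=> s_k; have lt_lN : (l < N)%N by case/andP: s_k => /leq_ltn_trans->.
have := le_UP_col_update (A := Dmat a b c l m n) (A' := Dmat a b c l.+1 m.-1 n)
  (j0 := Ordinal lt_lN) (s := s) (k := k).
rewrite (Dmat_a (l := l.+1)) ?(Dmat_b (l := l)) //=; [apply | lia] => [x | x j neq_jl].
  by rewrite !Dmat_b //=; lia.
have neq_jl' : (j : nat) != l by exact: neq_jl.
rewrite !mxE; have -> : (l.+1 + m.-1 = l + m)%N by lia.
by rewrite ltnS leq_eqVlt (negbTE neq_jl').
Qed.

Lemma le_UP_Dmat_shrink_a l m n s k : (l <= N)%N -> (s k < l)%N ->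
  \sum_x Dmat a b c l m n x (s x) + b k 0 - a k 0 <= UP (Dmat a b c l.-1 m.+1 n).
Proof.
move=> le_lN s_k; have lt_lN : (l.-1 < N)%N by lia.
have := le_UP_col_update (A := Dmat a b c l m n) (A' := Dmat a b c l.-1 m.+1 n)
  (j0 := Ordinal lt_lN) (s := s) (k := k).
rewrite (Dmat_a (l := l)) ?(Dmat_b (l := l.-1)) //=; [apply | lia | lia] => [x | x j neq_jl].
  by rewrite !Dmat_a //=; lia.
have neq_jl' : (j : nat) != l.-1 by exact: neq_jl.
rewrite !mxE; have -> : (l.-1 + m.+1 = l + m)%N by lia.
by have -> : (j < l)%N = (j < l.-1)%N by lia.
Qed.

End BlockMatrix.

Theorem proposition2 (R : realFieldType) (N : nat) (HN : (0 < N)%N)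
    (a b c : 'cV[R]_N) (l m n l' m' n' : nat)
    (Hs : (l + m + n)%N = N) (Hs' : (l' + m' + n')%N = N)
    (Hl : (l < l')%N) (Hm : (m' < m)%N) :
  UP (Dmat a b c l m n) + UP (Dmat a b c l' m' n')
  <= UP (Dmat a b c l.+1 m.-1 n) + UP (Dmat a b c l'.-1 m'.+1 n').
Proof.
have [s ->] := UP_attained (Dmat a b c l m n).
have [t ->] := UP_attained (Dmat a b c l' m' n').
have le_lm : (l + m <= N)%N by lia.
have le_lm' : (l' + m' <= N)%N by lia.
have le_l' : (l' <= N)%N by lia.
have [[i /andP[s_i t_i]] | [i [k /and4P[s_i t_i s_k t_k]]]] :=
  perm_block_exchange s t le_lm le_lm' Hl Hm.
  have := le_UP_Dmat_grow_a a b c n s_i.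
  have := le_UP_Dmat_shrink_a a b c m' n' le_l' t_i.
  lra.
have neq_ik : i != k by apply: contraTneq s_k => <-; rewrite -ltnNge; case/andP: s_i.
have := le_UP_Dmat_grow_a a b c n (l := l) (m := m) (s := (tperm i k * s)%g) (k := k).
have := le_UP_Dmat_shrink_a a b c m' n' (s := (tperm i k * t)%g) (k := i) le_l'.
rewrite !permM tpermL tpermR => /(_ t_k) shrink /(_ s_i) grow.
have := sum_tperm_mul (Dmat a b c l m n) s neq_ik.
have := sum_tperm_mul (Dmat a b c l' m' n') t neq_ik.
rewrite !(Dmat_b a b c n s_i) !(Dmat_c a b c n s_k).
rewrite !(Dmat_c a b c n' t_i) !(Dmat_a a b c m' n' t_k).
lra.
Qed.
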